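(* Let $k\ge1$ and $r\ge0$ be integers, and let $\mathcal{C}$ be a multiset of $2^k+r$ non-zero residues modulo $2^{k+1}$ such that no sub-collection sums to $2^k$ modulo $2^{k+1}$, and such that for no odd $\lambda$ can $\lambda\cdot\mathcal{C}$ be type 1 compressed. Fix $i$ and a sub-multiset $\mathcal{C}_i\subseteq\mathcal{C}$ with $|\mathcal{C}_i|=i$. Choose an element $x$ of $\mathcal{C}\setminus\mathcal{C}_i$ so that, with $\mathcal{C}_{i+1}=\mathcal{C}_i\cup\{x\}$, the size $|\mathcal{C}_{i+1}^*\setminus\mathcal{C}_i^*|$ is maximal. Then $|\mathcal{C}_{i+1}^*\setminus\mathcal{C}_i^*|>2$ unless at least one of the following holds: (1) $|\mathcal{C}_i^*|\le5$ or $|\mathcal{C}_i^*|\ge2^{k+1}-5$; (2) all elements of $\mathcal{C}\setminus\mathcal{C}_i$ are even; (3) there is an odd residue $u$ such that every element of $\mathcal{C}\setminus\mathcal{C}_i$ lies in $\{u,-u,2^k-u,-(2^k-u)\}$ modulo $2^{k+1}$.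
   Context: Multisets are called collections; $\mathcal{C}\setminus\mathcal{C}_i$ is the multiset difference. For a multiset $\mathcal{D}=\{a_1,\dots,a_d\}$ of residues modulo $2^{k+1}$, $\mathcal{D}^*=\{\sum_{i\in I}a_i \bmod 2^{k+1}: I\subseteq[d]\}$ (including $0$). $\lambda\cdot\mathcal{C}=\{\lambda c:c\in\mathcal{C}\}$. For a residue $t$, $|t|$ is the minimal absolute value of an integer in its residue class. A multiset $\mathcal{D}$ can be type 1 compressed if for some $\lambda>0$ it contains at least $\lambda$ elements each equal to $\pm1$ and also an element $t$ with $1<|t|\le\lambda+1$. *)

From mathcomp Require Import all_boot all_order all_algebra.
Set Implicit Arguments. Unset Strict Implicit. Unset Printing Implicit Defensive.
Import GRing.Theory.
Local Open Scope ring_scope.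

(* A multiset (collection) C of residues is a sequence C : seq 'Z_n; a
   sub-collection is given by a set of positions S : {set 'I_(size C)}. *)

(* (sub-collection of C indexed by S)^* : all subset sums, including 0. *)
Definition subsums n (C : seq 'Z_n) (S : {set 'I_(size C)}) : {set 'Z_n} :=
  [set (\sum_(j in I) C`_j) | I : {set 'I_(size C)} in powerset S].

Arguments subsums {n} C S.

Definition allsums n (D : seq 'Z_n) : {set 'Z_n} := subsums D [set: 'I_(size D)].

Definition absZ n (t : 'Z_n) : nat := minn (val t) (n - val t).

Definition type1_compressible n (D : seq 'Z_n) : Prop :=
  exists lam : nat, (0 < lam)%N /\
    (lam <= count (fun x : 'Z_n => (x == 1%R) || (x == (-1)%R)) D)%N /\
    exists2 t, t \in D & (1 < absZ t)%N && (absZ t <= lam.+1)%N.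

Definition scaleC n (lam : nat) (D : seq 'Z_n) : seq 'Z_n :=
  [seq lam%:R * c | c <- D].

From mathcomp Require Import all_boot all_order all_algebra.
From mathcomp Require Import zify.
Import GRing.Theory.
Set Implicit Arguments. Unset Strict Implicit. Unset Printing Implicit Defensive.

(* Let y be an odd element of C outside C_i; it is a unit, so every other
   candidate is m y with 0 <= m < N = 2^(k+1).  Reading A = C_i^* along the
   progression t y turns A into a 0/1 sequence f of period N, and the gain of
   adding m y is the number of drops of f at distance m, i.e. of t with f t and
   not f (t + m).  A maximal gain below 3 leaves at most two drops at distance
   1, so each value of f occupies at most two runs.  If some window of length w
   is constant, f also has a run of three opposite values, and sliding the
   window onto that run costs three drops; otherwise every window contains a
   change, and counting changes gives N <= w * drops 1 + drops w.  Either way,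
   once A and its complement have at least 6 elements, there are three drops at
   every distance w with 3 <= w and 2w + 3 <= N.  So m lies in
   {0, 1, 2, -2, -1, 2^k - 1, 2^k, 2^k + 1}, and 0, +-2 and 2^k are excluded by
   the hypotheses on C. *)

Lemma periodic_modn T N (g : nat -> T) n :
  (forall n, g (n + N) = g n) -> g (n %% N) = g n.
Proof.
move=> gN; rewrite {2}(divn_eq n N) addnC.
by elim: (n %/ N) => [|q IHq]; rewrite ?mul0n ?addn0 // mulSnr addnA gN.
Qed.

Lemma sum_periodic_shift N c (g : nat -> nat) :
  (forall n, g (n + N) = g n) ->
  \sum_(0 <= t < N) g (t + c) = \sum_(0 <= t < N) g t.
Proof.
case: N => [|N] gN; first by rewrite !big_geq.
elim: c => [|c IHc]; first by under eq_bigr do rewrite addn0.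
rewrite -IHc big_nat_recr //= [RHS]big_nat_recl //= addnC.
rewrite -addSnnS (addnC N.+1) gN; congr (_ + _).
by apply: eq_bigr => t _; rewrite addSnnS.
Qed.

Lemma sum_periodic_part N a m (g : nat -> nat) :
  (forall n, g (n + N) = g n) -> m <= N ->
  \sum_(0 <= j < m) g (j + a) <= \sum_(0 <= t < N) g t.
Proof.
move=> gN mN; rewrite -(sum_periodic_shift a gN) [leqRHS](big_cat_nat (n := m)) //=.
exact: leq_addr.
Qed.

Lemma neq_le_changes (g : nat -> bool) a b : a <= b ->
  g a != g b <= \sum_(a <= j < b) (g j != g j.+1).
Proof.
elim: b => [|b IHb]; first by rewrite leqn0 => /eqP ->; rewrite eqxx.
rewrite leq_eqVlt => /predU1P[-> | lt_ab]; first by rewrite eqxx.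
rewrite big_nat_recr //=; have := IHb lt_ab.
by case: (g a); case: (g b); case: (g b.+1) => /=; lia.
Qed.

Section PeriodicBoolSequence.

Variables (N : nat) (f : nat -> bool).
Hypothesis f_periodic : forall n, f (n + N) = f n.

Definition drops w := \sum_(0 <= t < N) (f t && ~~ f (t + w)).

Definition window w a := \sum_(0 <= j < w) f (a + j).

Lemma drops_eq_rises w : drops w = \sum_(0 <= t < N) (~~ f t && f (t + w)).
Proof.
apply/eqP; rewrite -(eqn_add2r (\sum_(0 <= t < N) f t)) /drops.
rewrite -{1}(sum_periodic_shift w (g := fun t => nat_of_bool (f t)));
  last by move=> n; rewrite f_periodic.
by rewrite -!big_split; apply/eqP/eq_bigr => t _ /=; case: (f t); case: (f (t + w)).
Qed.

Lemma sum_leaves b w :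
  \sum_(0 <= t < N) ((f t == b) && (f (t + w) != b)) = drops w.
Proof.
by case: b; last rewrite drops_eq_rises; apply: eq_bigr => t _;
  case: (f t); case: (f (t + w)).
Qed.

Lemma sum_changes w : \sum_(0 <= t < N) (f t != f (t + w)) = (drops w).*2.
Proof.
rewrite -addnn {1}drops_eq_rises -big_split; apply: eq_bigr => t _ /=.
by case: (f t); case: (f (t + w)).
Qed.

Lemma drops_subn w : w <= N -> drops (N - w) = drops w.
Proof.
move=> wN; rewrite [RHS]drops_eq_rises /drops.
rewrite -[LHS](sum_periodic_shift w (g := fun t => f t && ~~ f (t + (N - w)))) /=.
  by apply: eq_bigr => t _; rewrite -addnA subnKC // f_periodic andbC.
by move=> n; rewrite addnAC !f_periodic.
Qed.

Lemma window_periodic w a : window w (a + N) = window w a.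
Proof. by apply: eq_bigr => j _; rewrite addnAC f_periodic. Qed.

Lemma window_cat m n a : window (m + n) a = window m a + window n (a + m).
Proof.
rewrite /window (big_cat_nat (n := m)) ?leq_addr //= -{2}[m]add0n big_addn addKn.
by congr (_ + _); apply: eq_bigr => j _; rewrite addnA addnAC.
Qed.

Lemma window_const w a b :
  (forall j, j < w -> f (a + j) = b) -> window w a = b * w.
Proof.
move=> run; rewrite /window (eq_big_nat _ _ (F2 := fun=> nat_of_bool b)).
  by rewrite sum_nat_const_nat subn0 mulnC.
by move=> j /andP[_ /run ->].
Qed.

Lemma window_le_size w a : window w a <= w.
Proof.
rewrite -[leqRHS]subn0 -[leqRHS]muln1 -sum_nat_const_nat.
by apply: leq_sum => j _; apply: leq_b1.
Qed.

Lemma window_le_shift w a m : m <= N -> window w a <= window w (a + m) + drops w.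
Proof.
move=> mN; have slide : window w a <=
    window w (a + m) + \sum_(0 <= j < m) (f (j + a) && ~~ f (j + a + w)).
  elim: m {mN} => [|m IHm]; first by rewrite addn0 big_geq // addn0.
  rewrite big_nat_recr //= addnS.
  have step : window w (a + m).+1 + f (a + m) = window w (a + m) + f (a + m + w).
    rewrite /window -big_nat_recr //= big_nat_recl //= addn0 addnC.
    by congr (_ + _); apply: eq_bigr => j _; rewrite addSnnS.
  move: IHm step; rewrite (addnC m a).
  by case: (f (a + m)); case: (f (a + m + w)) => /=; lia.
apply: leq_trans slide _; rewrite leq_add2l.
apply: (sum_periodic_part a (g := fun t => f t && ~~ f (t + w))) => // n.
by rewrite addnAC !f_periodic.
Qed.

Lemma window_le w a b : 0 < N -> window w a <= window w b + drops w.
Proof.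
move=> N_gt0; rewrite -(periodic_modn a (window_periodic w)).
rewrite -(periodic_modn b (window_periodic w)).
have a_lt := ltn_pmod a N_gt0; have b_lt := ltn_pmod b N_gt0.
case: (leqP (a %% N) (b %% N)) => [le_ab | lt_ba].
  by rewrite -(subnKC le_ab) window_le_shift // leq_subLR; lia.
rewrite -[window w (b %% N)]window_periodic -(@subnKC (a %% N) (b %% N + N)); last by lia.
by rewrite window_le_shift //; lia.
Qed.

Lemma three_le_drops_of_runs w a u b : 0 < N -> 3 <= w ->
  (forall j, j < w -> f (a + j) = b) -> (forall j, j < 3 -> f (u + j) = ~~ b) ->
  3 <= drops w.
Proof.
move=> N_gt0 w_ge3 run_a run_u.
have Wa := window_const run_a.
have Wu : window w u = window 3 u + window (w - 3) (u + 3) by rewrite -window_cat subnKC.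
rewrite (window_const run_u) in Wu; have := window_le_size (w - 3) (u + 3).
case: b Wa Wu {run_a run_u} => /= Wa Wu.
  by have := window_le w a u N_gt0; lia.
by have := window_le w u a N_gt0; lia.
Qed.

Lemma exists_run3 b : 5 <= \sum_(0 <= t < N) (f t == b) -> drops 1 <= 2 ->
  exists u, forall j, j < 3 -> f (u + j) = b.
Proof.
move=> many drops1.
case: (boolP [exists t : 'I_N, [&& f t == b, f (t + 1) == b & f (t + 2) == b]]).
  case/existsP=> u /and3P[/eqP f0 /eqP f1 /eqP f2]; exists u.
  by case=> [|[|[|//]]] _; rewrite ?addn0.
move/existsPn=> no_run; exfalso.
(* Without a run of three b's, every b is one of the last two of its run. *)
pose leave t := (f t == b) && (f (t + 1) != b).
have pointwise t : t < N -> f t == b <= leave t + leave (t + 1).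
  move=> t_lt; move: (no_run (Ordinal t_lt)); rewrite /leave /= -addnA.
  by case: (f t); case: (f (t + 1)); case: (f (t + 2)); case: b {many no_run leave}.
have : \sum_(0 <= t < N) (f t == b) <= (drops 1).*2.
  rewrite -addnn -{1}(sum_leaves b 1) -[X in _ <= _ + X](sum_leaves b 1).
  rewrite -{2}(sum_periodic_shift 1 (g := leave)); last first.
    by move=> n; rewrite /leave addnAC !f_periodic.
  rewrite -big_split big_nat_cond [leqRHS]big_nat_cond.
  by apply: leq_sum => t /andP[/andP[_ /pointwise]].
lia.
Qed.

Lemma le_drops_of_changing_windows w :
  (forall t, t < N -> exists2 i, i < w & f (t + i) != f t) ->
  N <= w * drops 1 + drops w.
Proof.
move=> changing.
have pointwise t : t < N ->
    2 <= \sum_(0 <= j < w) (f (t + j) != f (t + j.+1)) + (f t != f (t + w)).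
  move=> /changing[i i_lt fi].
  (* Of the pairs (f t, f (t + i)), (f (t + i), f (t + w)), (f t, f (t + w)), exactly two differ. *)
  have := neq_le_changes (fun j => f (t + j)) (leq0n i).
  have := neq_le_changes (fun j => f (t + j)) (ltnW i_lt).
  rewrite /= addn0 [\sum_(0 <= j < w) _](big_cat_nat (n := i)) ?(ltnW i_lt) //=.
  by move: fi; case: (f t); case: (f (t + i)); case: (f (t + w)) => /=; lia.
have sum_steps : \sum_(0 <= t < N) \sum_(0 <= j < w) (f (t + j) != f (t + j.+1))
    = w * (drops 1).*2.
  rewrite exchange_big_nat -sum_changes -[w in w * _]subn0 -sum_nat_const_nat.
  apply: eq_bigr => j _; rewrite -[RHS](sum_periodic_shift j (g := fun t => f t != f (t + 1))).
    by apply: eq_bigr => t _; rewrite addnS addn1.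
  by move=> n; rewrite addnAC !f_periodic.
have : \sum_(0 <= t < N) 2 <= w * (drops 1).*2 + (drops w).*2.
  rewrite -sum_steps -sum_changes -big_split big_nat_cond [leqRHS]big_nat_cond.
  by apply: leq_sum => t /andP[/andP[_ /pointwise]].
rewrite sum_nat_const_nat; lia.
Qed.

Lemma three_le_drops w : drops 1 <= 2 ->
  (forall b, 5 <= \sum_(0 <= t < N) (f t == b)) -> 3 <= w -> 2 * w + 3 <= N ->
  3 <= drops w.
Proof.
move=> drops1 many w_ge3 wN; have N_gt0 : 0 < N by lia.
case: (boolP [exists t : 'I_N, [forall j : 'I_w, f (t + j) == f t]]).
  case/existsP=> t /forallP run; have [u run_u] := exists_run3 (many (~~ f t)) drops1.
  apply: (three_le_drops_of_runs N_gt0 w_ge3 _ run_u) => j j_lt.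
  exact/eqP/(run (Ordinal j_lt)).
move/existsPn=> no_run.
have changing t : t < N -> exists2 i, i < w & f (t + i) != f t.
  by move=> t_lt; have /forallPn[j fj] := no_run (Ordinal t_lt); exists j.
have := le_drops_of_changing_windows changing.
have : w * drops 1 <= w * 2 by rewrite leq_mul2l drops1 orbT.
lia.
Qed.

End PeriodicBoolSequence.

Local Open Scope ring_scope.

Section ResidueSubsets.

Variable n : nat.

Definition gain (A : {set 'Z_n}) (z : 'Z_n) : nat := #|[set a in A | a + z \notin A]|.

Lemma subsums_setU1 (C : seq 'Z_n) (S : {set 'I_(size C)}) j : j \notin S ->
  subsums C (j |: S) = subsums C S :|: [set a + C`_j | a in subsums C S].
Proof.
move=> jS; apply/setP => a; rewrite inE; apply/imsetP/orP.
- case=> I; rewrite powersetE => IjS ->.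
  have IDjS : I :\ j \subset S by rewrite -(setU1K jS) setSD.
  case: (boolP (j \in I)) => [jI | jNI].
    right; apply/imsetP; exists (\sum_(i in I :\ j) C`_i).
      by apply: imset_f; rewrite powersetE.
    by rewrite (big_setD1 j jI) addrC.
  by left; apply: imset_f; rewrite powersetE -(setU1K jS) subsetD1 IjS.
- case=> [/imsetP[I IS ->] | /imsetP[_ /imsetP[I IS ->] ->]].
    rewrite powersetE in IS; exists I => //.
    by rewrite powersetE (subset_trans IS (subsetU1 _ _)).
  rewrite powersetE in IS; have jNI : j \notin I by apply: contra jS; apply: subsetP.
  exists (j |: I); first by rewrite powersetE setUS.
  by rewrite big_setU1 //= addrC.
Qed.

Lemma card_subsums_setU1_diff (C : seq 'Z_n) (S : {set 'I_(size C)}) j : j \notin S ->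
  #|subsums C (j |: S) :\: subsums C S| = gain (subsums C S) C`_j.
Proof.
move=> jS; rewrite subsums_setU1 // setDUl setDv set0U.
set A := subsums C S.
have -> : [set a + C`_j | a in A] :\: A = (+%R^~ C`_j) @: [set a in A | a + C`_j \notin A].
  apply/setP => b; rewrite !inE; apply/andP/imsetP => [[bNA /imsetP[a aA b_eq]] | [a]].
    by exists a; rewrite // !inE aA -b_eq.
  rewrite !inE => /andP[aA aNA] ->; split=> //; exact: imset_f.
by rewrite card_imset //; apply: addIr.
Qed.

Hypothesis n_gt1 : (1 < n)%N.

Lemma sum_mul_unit_mem (A : {set 'Z_n}) (y : 'Z_n) : y \is a GRing.unit ->
  (\sum_(0 <= t < n) ((t%:R * y)%R \in A))%N = #|A|.
Proof.
move=> y_unit; rewrite -{1}(Zp_cast n_gt1) big_mkord.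
rewrite (eq_bigr (fun t : 'Z_n => nat_of_bool (t * y \in A))) => [|t _]; last by rewrite natr_Zp.
rewrite -sum1_card [RHS](reindex_inj (mulIr y_unit)) [RHS]big_mkcond /=.
by apply: eq_bigr => t _; case: (t * y \in A).
Qed.

Lemma gain_le2_multiple (A : {set 'Z_n}) (y z : 'Z_n) : y \is a GRing.unit ->
  (5 <= #|A|)%N -> (#|A| + 5 <= n)%N -> (gain A y <= 2)%N -> (gain A z <= 2)%N ->
  exists2 m, z = m%:R * y &
    (m < n)%N /\ (m <= 2 \/ n <= m + 2 \/ n < 2 * m + 3 < n + 6)%N.
Proof.
move=> y_unit A_ge5 A_le gain_y gain_z.
pose f t := t%:R * y \in A.
have f_periodic t : f (t + n)%N = f t by rewrite /f natrD pchar_Zp // addr0.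
have dropsE w : drops n f w = gain A (w%:R * y).
  rewrite /gain -(sum_mul_unit_mem _ y_unit); apply: eq_bigr => t _.
  by rewrite /f inE natrD mulrDl.
have many b : (5 <= \sum_(0 <= t < n) (f t == b))%N.
  case: b; [under eq_bigr do rewrite eqb_id | under eq_bigr do rewrite eqbF_neg -in_setC];
    rewrite sum_mul_unit_mem //.
  by rewrite -(leq_add2l #|A|) cardsC card_ord [leqRHS]Zp_cast.
have drops1 : (drops n f 1 <= 2)%N by rewrite dropsE mul1r.
have [m z_my m_lt] : exists2 m, z = m%:R * y & (m < n)%N.
  exists (val (z / y)); first by rewrite natr_Zp divrK.
  by rewrite -[ltnRHS](Zp_cast n_gt1) ltn_ord.
exists m => //; split=> //.
have drops_m : (drops n f m <= 2)%N by rewrite dropsE -z_my.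
have drops_nm : (drops n f (n - m) <= 2)%N by rewrite drops_subn // ltnW.
have := three_le_drops f_periodic drops1 many (w := m).
have := three_le_drops f_periodic drops1 many (w := n - m).
lia.
Qed.

End ResidueSubsets.

Lemma absZ_natr n d : (1 < n)%N -> absZ (d%:R : 'Z_n) = minn (d %% n) (n - d %% n).
Proof.
move=> n_gt1; have val_d : val (d%:R : 'Z_n) = (d %% n)%N := val_Zp_nat n_gt1 d.
by rewrite /absZ val_d.
Qed.

Lemma compressible_scaleC_inv n (D : seq 'Z_n) (y z : 'Z_n) : (4 <= n)%N ->
  y \is a GRing.unit -> y \in D -> z \in D -> z \in [:: 2%:R * y; - (2%:R * y)] ->
  type1_compressible (scaleC (val y^-1) D).
Proof.
move=> n_ge4 y_unit yD zD z2y; have n_gt1 : (1 < n)%N by lia.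
have scaled x : x \in D -> y^-1 * x \in scaleC (val y^-1) D.
  by move=> xD; rewrite -{1}[y^-1]natr_Zp; apply: map_f.
exists 1%N; split=> //; split.
  by rewrite -has_count; apply/hasP; exists 1; rewrite ?eqxx // -(mulVr y_unit) scaled.
exists (y^-1 * z); first exact: scaled.
have absZ2 : absZ (2%:R : 'Z_n) = 2%N by rewrite absZ_natr // modn_small; lia.
have absZN2 : absZ (- 2%:R : 'Z_n) = 2%N.
  rewrite -[- _]sub0r -(pchar_Zp n_gt1) -natrB ?absZ_natr ?modn_small //; lia.
move: z2y; rewrite !inE => /orP[] /eqP ->;
  by rewrite ?mulrN mulrCA mulVr // mulr1 ?absZN2 ?absZ2.
Qed.

Section DyadicResidues.

Variable k : nat.

Lemma dyadic_gt1 : (1 < 2 ^ k.+1)%N.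
Proof. by rewrite -[1%N](expn0 2) ltn_exp2l. Qed.

Lemma unit_dyadicE (u : 'Z_(2 ^ k.+1)) : (u \is a GRing.unit) = odd (val u).
Proof. by rewrite -{1}(natr_Zp u) unitZpE ?dyadic_gt1 // coprime_pexpl // coprime2n. Qed.

Lemma half_mul_odd (u : 'Z_(2 ^ k.+1)) : odd (val u) -> (2 ^ k)%:R * u = (2 ^ k)%:R.
Proof.
move=> u_odd; rewrite -[u in _ * u]natr_Zp -natrM.
have -> : (2 ^ k * val u = 2 ^ k + 2 ^ k.+1 * (val u)./2)%N.
  by move: (val u) u_odd => v v_odd; rewrite -{1}(odd_double_half v) v_odd expnS; nia.
by rewrite natrD natrM pchar_Zp ?dyadic_gt1 // mul0r addr0.
Qed.

Lemma opp_half : - (2 ^ k)%:R = (2 ^ k)%:R :> 'Z_(2 ^ k.+1).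
Proof.
apply/eqP; rewrite eq_sym -addr_eq0 -natrD addnn -mul2n -expnS.
by rewrite pchar_Zp ?dyadic_gt1.
Qed.

Lemma dyadic_multiple_cases (y : 'Z_(2 ^ k.+1)) m : odd (val y) -> (m < 2 ^ k.+1)%N ->
  (m <= 2 \/ 2 ^ k.+1 <= m + 2 \/ 2 ^ k.+1 < 2 * m + 3 < 2 ^ k.+1 + 6)%N ->
  [\/ m%:R * y = 0, m%:R * y = (2 ^ k)%:R, m%:R * y \in [:: 2%:R * y; - (2%:R * y)]
    | m%:R * y \in [:: y; - y; (2 ^ k)%:R - y; - ((2 ^ k)%:R - y)]].
Proof.
move=> y_odd m_lt; have N2 := expnS 2 k; have k_pos : (0 < 2 ^ k)%N by rewrite expn_gt0.
have natr_sub d : (d <= 2)%N -> (2 ^ k.+1 - d)%:R * y = - (d%:R * y).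
  move=> d_le2; have d_le : (d <= 2 ^ k.+1)%N by lia.
  by rewrite natrB // pchar_Zp ?dyadic_gt1 // sub0r mulNr.
case=> [m_le2 | [m_high | m_mid]].
- case: m m_le2 {m_lt} => [|[|[|//]]] _; rewrite ?mul0r ?mul1r.
  + by constructor 1.
  + by constructor 4; rewrite inE eqxx.
  + by constructor 3; rewrite inE eqxx.
- have [->|->] : m = (2 ^ k.+1 - 1)%N \/ m = (2 ^ k.+1 - 2)%N by lia.
    by constructor 4; rewrite natr_sub // mul1r !inE eqxx orbT.
  by constructor 3; rewrite natr_sub // !inE eqxx orbT.
- have [->|[->|->]] : m = (2 ^ k - 1)%N \/ m = (2 ^ k)%N \/ m = (2 ^ k + 1)%N by lia.
  + by constructor 4; rewrite natrB // mulrBl half_mul_odd // mul1r !inE eqxx !orbT.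
  + by constructor 2; rewrite half_mul_odd.
  + constructor 4; rewrite natrD mulrDl half_mul_odd // mul1r.
    by rewrite opprB opp_half addrC !inE eqxx !orbT.
Qed.

End DyadicResidues.

Lemma nth_mem_allsums n (D : seq 'Z_n) (j : 'I_(size D)) : D`_j \in allsums D.
Proof.
apply/imsetP; exists [set j]; first by rewrite powersetE subsetT.
by rewrite big_set1.
Qed.

Theorem lemma3p7 (k r i : nat) (C : seq 'Z_(2 ^ k.+1))
  (S : {set 'I_(size C)}) (x : 'I_(size C)) :
  (1 <= k)%N ->
  size C = (2 ^ k + r)%N ->
  (forall c, c \in C -> c != 0) ->
  (2 ^ k)%:R \notin allsums C ->
  (forall lam : nat, odd lam -> ~ type1_compressible (scaleC lam C)) ->
  #|S| = i ->
  x \notin S ->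
  (forall y : 'I_(size C), y \notin S ->
     (#|subsums C (y |: S) :\: subsums C S|
        <= #|subsums C (x |: S) :\: subsums C S|)%N) ->
  (2 < #|subsums C (x |: S) :\: subsums C S|)%N
  \/ (#|subsums C S| <= 5)%N
  \/ (2 ^ k.+1 - 5 <= #|subsums C S|)%N
  \/ (forall j : 'I_(size C), j \notin S -> ~~ odd (val C`_j))
  \/ (exists2 u : 'Z_(2 ^ k.+1), odd (val u) &
        forall j : 'I_(size C), j \notin S ->
          C`_j \in [:: u; - u; (2 ^ k)%:R - u; - ((2 ^ k)%:R - u)]).
Proof.
move=> k_ge1 _ C_nz half_notin_sums not_compressible _ xS x_max.
set A := subsums C S; have gainE := @card_subsums_setU1_diff _ C S.
rewrite gainE //; case: (ltnP 2 (gain A C`_x)) => [|gain_x]; first by left.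
right; case: (leqP #|A| 5) => [|A_gt5]; first by left.
right; case: (leqP (2 ^ k.+1 - 5) #|A|) => [|A_lt]; first by left.
right; case: (pickP (fun j => (j \notin S) && odd (val C`_j))); last first.
  by move=> all_even; left=> j jS; have := all_even j; rewrite jS => /negbT.
move=> j0 /andP[j0S y_odd]; right; exists C`_j0 => // j jS.
have gain_le2 l : l \notin S -> (gain A (C`_l)%R <= 2)%N.
  by move=> lS; rewrite -gainE // (leq_trans (x_max l lS)) // gainE.
have y_unit : C`_j0 \is a GRing.unit by rewrite unit_dyadicE.
have A_le : (#|A| + 5 <= 2 ^ k.+1)%N by lia.
have [m z_my [m_lt m_cases]] := gain_le2_multiple (dyadic_gt1 k) y_unit (ltnW A_gt5) A_le
  (gain_le2 j0 j0S) (gain_le2 j jS).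
have N_ge4 : (4 <= 2 ^ k.+1)%N by rewrite -[4%N]/(2 ^ 2)%N leq_exp2l.
have C_j : C`_j \in C := mem_nth 0 (ltn_ord j).
rewrite z_my; case: (dyadic_multiple_cases y_odd m_lt m_cases) => // [z0 | zh | z2y]; exfalso.
- by move: (C_nz _ C_j); rewrite z_my z0 eqxx.
- by move: half_notin_sums; rewrite -zh -z_my nth_mem_allsums.
- have inv_odd : odd (val (C`_j0)^-1)%R by rewrite -unit_dyadicE unitrV.
  rewrite -z_my in z2y; apply: not_compressible inv_odd _.
  exact: compressible_scaleC_inv N_ge4 y_unit (mem_nth 0 (ltn_ord j0)) C_j z2y.
Qed.
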